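(* Let $X\subseteq\{0,1\}^n$ be a nonempty set and let $U=\{c_1,\dots,c_m\}\subseteq\mathbb{R}^{n+1}$ be a finite set of scenarios, $c_j=(\tilde c_j,\bar c_j)$ with $\tilde c_j\in\mathbb{R}$, $\bar c_j\in\mathbb{R}^n$, and $f(x)=\max_{j=1,\dots,m}\,\bar c_j^\top x+\tilde c_j$. Assume that all scenarios are perturbed by a continuously distributed random vector in $\mathbb{R}^{m(n+1)}$ with full-dimensional support (i.e. all $m(n+1)$ entries $\tilde c_j,\bar c_j$ are replaced by their perturbed values). Then, with probability one, in each iteration $k$ of Algorithm SD (described in the context) the set $\partial f(x^k)\cap(-\mathcal{N}_{\operatorname{conv}(V^k)}(x^k))$ is a singleton.
   Context: For a convex function $f$, $\partial f(x)$ denotes its subdifferential at $x$. For a convex set $C$ and $x\in C$, $\mathcal{N}_C(x)=\{d\in\mathbb{R}^n: d^\top(y-x)\le 0\ \forall y\in C\}$ is the normal cone of $C$ at $x$. Algorithm SD: pick any $\hat x^0\in X$ and set $V^1=\{\hat x^0\}$. For $k=1,2,\dots$: compute $\alpha^k\in\mathbb{R}^{V^k}_+$ with $\sum_{v\in V^k}\alpha^k_v=1$, the point $x^k=\sum_{v\in V^k}\alpha^k_v v$ minimizing $f$ over $\operatorname{conv}(V^k)$, and a vector $c^k\in\partial f(x^k)\cap(-\mathcal{N}_{\operatorname{conv}(V^k)}(x^k))$ (in this finite case, $(x^k,\alpha^k)$ together with $z^k=f(x^k)$ is obtained as a basic optimal solution of the linear program $\min\{z:\ \bar c_j^\top x+\tilde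 c_j\le z\ (j=1,\dots,m),\ x=\sum_{v\in V^k}\alpha_v v,\ \alpha\ge 0,\ \sum_{v\in V^k}\alpha_v=1\}$); then compute a minimizer $\hat x^k$ of $\min_{x\in X}(c^k)^\top x$. If $(c^k)^\top\hat x^k\ge (c^k)^\top x^k$, stop and output $x^k$; otherwise set $V^{k+1}:=V^k\cup\{\hat x^k\}$ and continue. *)

From HB Require Import structures.
From mathcomp Require Import all_boot all_order all_algebra.
From mathcomp Require Import all_classical all_reals all_analysis.
Unset Printing Implicit Defensive.
Import Order.TTheory GRing.Theory Num.Theory.
Local Open Scope classical_set_scope.
Local Open Scope ring_scope.

Section Defs.
Context {R : realType}.

Definition dotp {n : nat} (u v : 'I_n -> R) : R := \sum_(i < n) u i * v i.
Definition vsub {n : nat} (u v : 'I_n -> R) : 'I_n -> R := fun i => u i - v i.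
Definition vopp {n : nat} (u : 'I_n -> R) : 'I_n -> R := fun i => - u i.

(* scenario data in R^{m(n+1)}: c (j, ord0) = tilde c_j,
   c (j, lift ord0 i) = (bar c_j)_i *)
Definition scen_data (n m : nat) := ('I_m * 'I_n.+1)%type -> R.
Definition ctil {n m : nat} (c : scen_data n m) (j : 'I_m) : R := c (j, ord0).
Definition cbar {n m : nat} (c : scen_data n m) (j : 'I_m) : 'I_n -> R :=
  fun i => c (j, lift ord0 i).
Definition aff {n m : nat} (c : scen_data n m) (j : 'I_m) (x : 'I_n -> R) : R :=
  dotp (cbar c j) x + ctil c j.

Definition fobj {n m : nat} (hm : (0 < m)%N) (c : scen_data n m) (x : 'I_n -> R) : R :=
  \big[Num.max/aff c (Ordinal hm) x]_(j < m) aff c j x.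

Definition subdiff {n : nat} (f : ('I_n -> R) -> R) (x : 'I_n -> R) : set ('I_n -> R) :=
  [set g | forall y, f x + dotp g (vsub y x) <= f y].

Definition vnth {n : nat} (V : seq ('I_n -> R)) (i : nat) : 'I_n -> R :=
  nth (fun _ => 0) V i.

Definition comb {n : nat} (V : seq ('I_n -> R)) (a : 'I_(size V) -> R) : 'I_n -> R :=
  fun k => \sum_(i < size V) a i * vnth V i k.

Definition convhull {n : nat} (V : seq ('I_n -> R)) : set ('I_n -> R) :=
  [set y | exists a : 'I_(size V) -> R,
     (forall i, 0 <= a i) /\ \sum_(i < size V) a i = 1 /\ y = comb V a].

Definition normal_cone {n : nat} (C : set ('I_n -> R)) (x : 'I_n -> R) : set ('I_n -> R) :=
  [set d | forall y, C y -> dotp d (vsub y x) <= 0].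

Definition SDset {n : nat} (f : ('I_n -> R) -> R) (V : seq ('I_n -> R)) (x : 'I_n -> R) :=
  subdiff f x `&` [set g | normal_cone (convhull V) x (vopp g)].

(* The LP  min { z : bar c_j^T x + tilde c_j <= z (all j), x = sum_v a_v v,
                     a >= 0, sum_v a_v = 1 } in the variables (x, a, z). *)
Definition lp_feasible {n m : nat} (c : scen_data n m) (V : seq ('I_n -> R))
    (x : 'I_n -> R) (a : 'I_(size V) -> R) (z : R) : Prop :=
  (forall j, aff c j x <= z) /\ x = comb V a /\ (forall i, 0 <= a i) /\
  \sum_(i < size V) a i = 1.

Definition lp_optimal {n m : nat} (c : scen_data n m) (V : seq ('I_n -> R))
    (x : 'I_n -> R) (a : 'I_(size V) -> R) (z : R) : Prop :=
  lp_feasible c V x a z /\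
  forall x' a' z', lp_feasible c V x' a' z' -> z <= z'.

(* basic solution: the constraints active at (x,a,z) contain
   n + |V| + 1 linearly independent ones, i.e. the only direction
   (dx,da,dz) satisfying all active constraints with equality
   (homogeneous version) is zero. *)
Definition lp_basic {n m : nat} (c : scen_data n m) (V : seq ('I_n -> R))
    (x : 'I_n -> R) (a : 'I_(size V) -> R) (z : R) : Prop :=
  forall (dx : 'I_n -> R) (da : 'I_(size V) -> R) (dz : R),
    (forall j, aff c j x = z -> dotp (cbar c j) dx = dz) ->
    dx = comb V da ->
    (forall i, a i = 0 -> da i = 0) ->
    \sum_(i < size V) da i = 0 ->
    [/\ dx = (fun _ => 0), da = (fun _ => 0) & dz = 0].

Definition lp_basic_optimal {n m : nat} (c : scen_data n m) (V : seq ('I_n -> R))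
    (x : 'I_n -> R) (a : 'I_(size V) -> R) (z : R) : Prop :=
  lp_optimal c V x a z /\ lp_basic c V x a z.

(* The sets V^k that can occur in some run of Algorithm SD. *)
Inductive SD_reach {n m : nat} (hm : (0 < m)%N) (X : set ('I_n -> R))
    (c : scen_data n m) : seq ('I_n -> R) -> Prop :=
| SD_reach0 (x0 : 'I_n -> R) : X x0 -> SD_reach hm X c [:: x0]
| SD_reachS (V : seq ('I_n -> R)) (x : 'I_n -> R) (a : 'I_(size V) -> R)
    (g xh : 'I_n -> R) :
    SD_reach hm X c V ->
    lp_basic_optimal c V x a (fobj hm c x) ->
    SDset (fobj hm c) V x g ->
    X xh -> (forall y, X y -> dotp g xh <= dotp g y) ->
    dotp g xh < dotp g x ->
    SD_reach hm X c (rcons V xh).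

Definition SD_singleton_property {n m : nat} (hm : (0 < m)%N) (X : set ('I_n -> R))
    (c : scen_data n m) : Prop :=
  forall V, SD_reach hm X c V ->
  forall (x : 'I_n -> R) (a : 'I_(size V) -> R),
    lp_basic_optimal c V x a (fobj hm c x) ->
    exists g, SDset (fobj hm c) V x = [set g].

Definition cbox {I : finType} (a b : I -> R) : set (I -> R) :=
  [set y | forall i, a i <= y i <= b i].
Definition obox {I : finType} (a b : I -> R) : set (I -> R) :=
  [set y | forall i, a i < y i < b i].

Definition lebesgue_null {I : finType} (A : set (I -> R)) : Prop :=
  forall eps : R, 0 < eps ->
  exists a b : nat -> I -> R,
    (forall k i, a k i <= b k i) /\
    A `<=` \bigcup_k cbox (a k) (b k) /\
    forall N, \sum_(k < N) \prod_(i : I) (b k i - a k i) <= eps.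

End Defs.

Section Prob.
Context {R : realType} {d : measure_display} {Omega : measurableType d}.

(* continuously distributed: distribution absolutely continuous w.r.t. Lebesgue *)
Definition cont_distributed {I : finType} (P : probability Omega R)
    (xi : Omega -> I -> R) : Prop :=
  forall A : set (I -> R), lebesgue_null A ->
    exists N, [/\ measurable N, P N = 0%E & xi @^-1` A `<=` N].

Definition in_support {I : finType} (P : probability Omega R)
    (xi : Omega -> I -> R) (y : I -> R) : Prop :=
  forall a b : I -> R, obox a b y ->
    measurable (xi @^-1` obox a b) /\ (0 < P (xi @^-1` obox a b))%E.

Definition full_dim_support {I : finType} (P : probability Omega R)
    (xi : Omega -> I -> R) : Prop :=
  exists a b : I -> R, (forall i, a i < b i) /\
    forall y, obox a b y -> in_support P xi y.

End Prob.

From HB Require Import structures.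
From mathcomp Require Import all_boot all_order all_algebra.
From mathcomp Require Import all_classical all_reals all_analysis.
From mathcomp Require Import ring lra.
Import Order.TTheory GRing.Theory Num.Theory.
Local Open Scope classical_set_scope.
Local Open Scope ring_scope.

(* Call scenario data generic when, for every set T of 0/1 points and every
   set J of scenarios with |T| < |J|, the affine pieces indexed by J never take
   a common value on the affine hull of T.  For fixed (T, J) the non-generic
   data form the image of a locally Lipschitz map from a space of dimension
   m(n+1) - |J| + |T| < m(n+1) (solve for the constant terms of all pieces of J
   but one), hence a Lebesgue-null set, and there are finitely many pairs
   (T, J): a continuously distributed perturbation is almost surely generic.

   Fix generic data and a basic optimal solution x = sum_i a_i v_i of the LP,
   with support S and set J of active pieces.  As x lies in the affine hull of
   the 0/1 points of S and all pieces of J agree there, |J| <= |S|.  Basicness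
   makes M = [[A, 1], [-1, 0]], A_ij = bar c_j . v_i, injective on row vectors,
   hence invertible.  Solving M (lambda, mu) = (0, -1) gives weights lambda on
   J summing to one with A lambda constant; LP optimality makes them
   nonnegative, so g = sum_j lambda_j bar c_j lies in the set.  Surjectivity of
   M pins down each coordinate of any element h of the set: h . dx is forced
   along every direction dx spanned by the support on which all active pieces
   grow at a common rate. *)

(** * Lebesgue-null sets *)

Lemma ler_sum_uniq_subset {R : numDomainType} {T : eqType} {s s' : seq T}
    {F : T -> R} :
  uniq s -> uniq s' -> {subset s <= s'} -> (forall t, 0 <= F t) ->
  \sum_(t <- s) F t <= \sum_(t <- s') F t.
Proof.
move=> us us' ss' F0.
have s_perm : perm_eq s [seq t <- s' | t \in s].
  apply: uniq_perm => //; first exact: filter_uniq.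
  by move=> t; rewrite mem_filter; case: (boolP (t \in s)) => // /ss'.
rewrite [leRHS](bigID (mem s)) /= -[\sum_(t <- s' | t \in s) F t]big_filter.
by rewrite -(perm_big _ s_perm) lerDl sumr_ge0.
Qed.

Lemma sum_geometric_le {R : realFieldType} (eps : R) (s : seq nat) :
  0 <= eps -> uniq s -> \sum_(k <- s) eps / 2 ^+ k.+1 <= eps.
Proof.
move=> eps0 us; pose K := (\max_(k <- s) k).+1.
have term_ge0 k : 0 <= eps / 2 ^+ k.+1 by rewrite divr_ge0 ?exprn_ge0.
apply: le_trans (ler_sum_uniq_subset us (iota_uniq 0 K) _ term_ge0) _.
  by move=> k ks; rewrite mem_iota add0n ltnS leq0n /= (leq_bigmax_seq _ ks).
have -> : iota 0 K = index_iota 0 K by rewrite /index_iota subn0.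
rewrite big_mkord; suff -> : \sum_(k < K) eps / 2 ^+ k.+1 = eps - eps / 2 ^+ K.
  by rewrite gerBl divr_ge0 ?exprn_ge0.
elim: K => [|K IH]; first by rewrite big_ord0 expr0 divr1 subrr.
rewrite big_ord_recr /= IH exprS.
have h2 : (2 : R) ^+ K != 0 by rewrite expf_neq0.
by field; rewrite h2 /=; lra.
Qed.

Section NullSets.
Context {R : realType} {I : finType}.
Hypothesis I_gt0 : (0 < #|I|)%N.

Definition box_vol (a b : I -> R) : R := \prod_i (b i - a i).

Lemma box_vol_ge0 (a b : I -> R) : (forall i, a i <= b i) -> 0 <= box_vol a b.
Proof. by move=> ab; apply: prodr_ge0 => i _; rewrite subr_ge0. Qed.

Lemma box_vol0 (a : I -> R) : box_vol a a = 0.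
Proof. by have [i0 _] := card_gt0P I_gt0; rewrite /box_vol (bigD1 i0) //= subrr mul0r. Qed.

Lemma lebesgue_null_sub (A B : set (I -> R)) :
  A `<=` B -> lebesgue_null B -> lebesgue_null A.
Proof.
move=> AB nB eps eps0; have [a [b [ab [Bab vol]]]] := nB eps eps0.
by exists a, b; split; [|split => //; exact: subset_trans Bab].
Qed.

(* Indices missed by [pickle_inv] get degenerate boxes, of volume 0 because
   [I] is nonempty. *)
Lemma lebesgue_null_countable_cover (A : set (I -> R)) :
  (forall eps, 0 < eps -> exists (J : countType) (a b : J -> I -> R),
    [/\ forall j i, a j i <= b j i, A `<=` \bigcup_j cbox (a j) (b j) &
        forall s, uniq s -> \sum_(j <- s) box_vol (a j) (b j) <= eps]) ->
  lebesgue_null A.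
Proof.
move=> hA eps eps0; have [J [a [b [ab Aab vol]]]] := hA eps eps0.
pose a' k := oapp a (fun _ => 0) (@pickle_inv J k).
pose b' k := oapp b (fun _ => 0) (@pickle_inv J k).
exists a', b'; split; [|split].
- by move=> k i; rewrite /a' /b'; case: pickle_inv => /=.
- move=> y /Aab [j _ yj]; exists (pickle j) => //.
  by rewrite /a' /b' pickleK_inv.
move=> N; have := vol _ (pmap_uniq (@pickle_invK J) (iota_uniq 0 N)).
rewrite big_pmap -(big_mkord xpredT (fun k => box_vol (a' k) (b' k))).
rewrite /index_iota subn0 => le_eps; apply: le_trans le_eps.
apply: ler_sum => k _; rewrite /a' /b'.
by case: pickle_inv => //=; rewrite box_vol0.
Qed.

Lemma lebesgue_null_set0 : lebesgue_null (set0 : set (I -> R)).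
Proof.
apply: lebesgue_null_countable_cover => eps eps0.
exists void, (fun _ _ => 0), (fun _ _ => 0); split => //.
by move=> [|[]]; rewrite ?big_nil ?ltW.
Qed.

Lemma lebesgue_null_bigcup (J : countType) (A : J -> set (I -> R)) :
  (forall j, lebesgue_null (A j)) -> lebesgue_null (\bigcup_j A j).
Proof.
move=> nA; apply: lebesgue_null_countable_cover => eps eps0.
have /choice [ab hab] : forall j : J, exists ab : (nat -> I -> R) * (nat -> I -> R),
    [/\ forall l i, ab.1 l i <= ab.2 l i, A j `<=` \bigcup_l cbox (ab.1 l) (ab.2 l)
      & forall L, \sum_(l < L) box_vol (ab.1 l) (ab.2 l) <= eps / 2 ^+ (pickle j).+1].
  move=> j; have [|a [b [ab [Aab vol]]]] := nA j (eps / 2 ^+ (pickle j).+1).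
    by rewrite divr_gt0 ?exprn_gt0.
  by exists (a, b).
pose a (jl : J * nat) := (ab jl.1).1 jl.2; pose b (jl : J * nat) := (ab jl.1).2 jl.2.
have vol_ge0 jl : 0 <= box_vol (a jl) (b jl).
  by apply: box_vol_ge0 => i; case: (hab jl.1) => + _ _; apply.
exists _, a, b; split.
- by move=> [j l] i; case: (hab j) => + _ _; apply.
- move=> y [j _ Ajy]; have [_ /(_ y Ajy) [l _ yl] _] := hab j.
  by exists (j, l).
move=> s us; pose js := undup (map fst s); pose L := (\max_(jl <- s) jl.2).+1.
apply: (@le_trans _ _ (\sum_(jl <- [seq (j, l) | j <- js, l <- iota 0 L])
                         box_vol (a jl) (b jl))).
  apply: ler_sum_uniq_subset => //.
    by apply: allpairs_uniq; [exact: undup_uniq|exact: iota_uniq|move=> [? ?] [? ?] _ _].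
  move=> [j l] jls; apply/allpairsP; exists (j, l).
  rewrite mem_undup mem_iota add0n ltnS leq0n /=; split => //; first by apply/mapP; exists (j, l).
  exact: (leq_bigmax_seq _ jls).
rewrite big_allpairs.
apply: (@le_trans _ _ (\sum_(j <- js) eps / 2 ^+ (pickle j).+1)).
  apply: ler_sum => j _; have [_ _ /(_ L)] := hab j.
  by rewrite -(big_mkord xpredT (fun l => box_vol (a (j, l)) (b (j, l)))) /index_iota subn0.
rewrite -(big_map pickle xpredT (fun k => eps / 2 ^+ k.+1)) sum_geometric_le ?ltW //.
by rewrite map_inj_uniq ?undup_uniq //; exact: pickle_inj.
Qed.

End NullSets.

(** * Locally Lipschitz images of lower-dimensional spaces *)

Section LocallyLipschitz.
Context {R : realType} {K : finType}.

Definition locally_lipschitz (F : (K -> R) -> R) : Prop :=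
  forall B, 0 <= B -> exists2 L, 0 <= L &
    forall p q e, (forall k, `|p k| <= B) -> (forall k, `|q k| <= B) -> 0 <= e ->
      (forall k, `|p k - q k| <= e) -> `|F p - F q| <= L * e.

Lemma locally_lipschitz_cst (r : R) : locally_lipschitz (fun=> r).
Proof. by move=> B _; exists 0 => // p q e _ _ e0 _; rewrite subrr normr0 mul0r. Qed.

Lemma locally_lipschitz_coord k : locally_lipschitz (fun p => p k).
Proof. by move=> B _; exists 1 => // p q e _ _ _; rewrite mul1r. Qed.

Lemma locally_lipschitzD F G : locally_lipschitz F -> locally_lipschitz G ->
  locally_lipschitz (fun p => F p + G p).
Proof.
move=> lF lG B B0; have [LF LF0 hF] := lF B B0; have [LG LG0 hG] := lG B B0.
exists (LF + LG) => [|p q e Bp Bq e0 pq]; first exact: addr_ge0.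
rewrite opprD addrACA mulrDl (le_trans (ler_normD _ _)) //.
by rewrite lerD ?hF ?hG.
Qed.

Lemma locally_lipschitzN F : locally_lipschitz F -> locally_lipschitz (fun p => - F p).
Proof.
move=> lF B B0; have [L L0 hF] := lF B B0; exists L => // p q e Bp Bq e0 pq.
by rewrite -opprD normrN hF.
Qed.

Lemma locally_lipschitzB F G : locally_lipschitz F -> locally_lipschitz G ->
  locally_lipschitz (fun p => F p - G p).
Proof. by move=> lF lG; apply: locally_lipschitzD => //; exact: locally_lipschitzN. Qed.

Lemma locally_lipschitz_bounded {F} : locally_lipschitz F -> forall B, 0 <= B ->
  exists2 M, 0 <= M & forall p, (forall k, `|p k| <= B) -> `|F p| <= M.
Proof.
move=> lF B B0; have [L L0 hF] := lF B B0.
exists (`|F (fun=> 0)| + L * B) => [|p Bp]; first by rewrite addr_ge0 ?mulr_ge0.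
rewrite -[F p](subrK (F (fun=> 0))) (le_trans (ler_normD _ _)) // addrC lerD2l.
by apply: hF => // k; rewrite ?normr0 ?subr0.
Qed.

Lemma locally_lipschitzM F G : locally_lipschitz F -> locally_lipschitz G ->
  locally_lipschitz (fun p => F p * G p).
Proof.
move=> lF lG B B0; have [LF LF0 hF] := lF B B0; have [LG LG0 hG] := lG B B0.
have [MF MF0 bF] := locally_lipschitz_bounded lF B B0.
have [MG MG0 bG] := locally_lipschitz_bounded lG B B0.
exists (MF * LG + MG * LF) => [|p q e Bp Bq e0 pq]; first by rewrite addr_ge0 ?mulr_ge0.
have -> : F p * G p - F q * G q = F p * (G p - G q) + G q * (F p - F q) by ring.
rewrite (le_trans (ler_normD _ _)) // mulrDl -!mulrA !normrM.
by rewrite lerD ?ler_pM ?bF ?bG ?hF ?hG.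
Qed.

Lemma locally_lipschitz_sum (J : Type) (r : seq J) (P : pred J)
    (F : J -> (K -> R) -> R) :
  (forall j, locally_lipschitz (F j)) ->
  locally_lipschitz (fun p => \sum_(j <- r | P j) F j p).
Proof.
move=> lF; elim: r => [|j r IH].
  by under eq_fun do rewrite big_nil; exact: locally_lipschitz_cst.
under eq_fun do rewrite big_cons.
by case: (P j) => //; exact: locally_lipschitzD.
Qed.

End LocallyLipschitz.

Definition grid_pt {R : numDomainType} (B : R) (M i : nat) : R :=
  - B + i%:R * (2 * B / M.+1%:R).

Lemma grid_cell {R : archiRealFieldType} (M : nat) {B t : R} : 0 < B -> `|t| <= B ->
  exists i : 'I_M.+1, `|t - grid_pt B M i| <= 2 * B / M.+1%:R /\ `|grid_pt B M i| <= B.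
Proof.
move=> B0; rewrite ler_norml => /andP[tB Bt]; set h := 2 * B / M.+1%:R.
have h0 : 0 < h by rewrite divr_gt0 ?mulr_gt0.
have Mh : M%:R * h + h = 2 * B.
  by rewrite -[h in _ + h]mul1r -mulrDl natr1 /h mulrC divfK ?pnatr_eq0.
have tB0 : 0 <= t + B by lra.
have th0 := divr_ge0 tB0 (ltW h0).
have /andP[tr_le tr_gt] := truncn_itv th0.
pose k := minn (Num.Def.trunc ((t + B) / h)) M.
have k_lt : (k < M.+1)%N by rewrite ltnS geq_minr.
exists (Ordinal k_lt); rewrite /grid_pt -/h /=.
have k_le : k%:R * h <= t + B.
  by rewrite -ler_pdivlMr // (le_trans _ tr_le) // ler_nat geq_minl.
have k_ge0 : 0 <= k%:R * h := mulr_ge0 (ler0n _ _) (ltW h0).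
have k_M : k%:R * h <= M%:R * h by rewrite ler_pM2r // ler_nat geq_minr.
suff : t + B <= k%:R * h + h.
  by move=> ?; rewrite !ler_norml; split; apply/andP; split; lra.
rewrite /k; have [trM|Mtr] := leqP (Num.Def.trunc ((t + B) / h)) M; last lra.
move: tr_gt; rewrite ltr_pdivrMr // => /ltW.
by rewrite -[_.+1]addn1 natrD mulrDl mul1r.
Qed.

Lemma grid_volume_le {R : realFieldType} {N x : R} {k i : nat} :
  1 <= N -> 0 <= x -> (k < i)%N -> N ^+ k * (x / N) ^+ i <= x ^+ i / N.
Proof.
move=> N1 x0 ki; have N0 : 0 < N by apply: lt_le_trans N1.
rewrite expr_div_n mulrCA ler_wpM2l ?exprn_ge0 //.
rewrite -(subnKC (ltnW ki)) exprD invfM mulrA mulfV ?mul1r ?expf_neq0 ?gt_eqF //.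
by rewrite lef_pV2 ?posrE ?exprn_gt0 // ler_eXnr // subn_gt0.
Qed.

Section LipschitzImage.
Context {R : realType} {K I : finType}.
Hypothesis card_lt : (#|K| < #|I|)%N.

Lemma lebesgue_null_image_box (F : (K -> R) -> I -> R) (B L : R) :
  0 < B -> 0 <= L ->
  (forall p q e i, (forall k, `|p k| <= B) -> (forall k, `|q k| <= B) -> 0 <= e ->
     (forall k, `|p k - q k| <= e) -> `|F p i - F q i| <= L * e) ->
  lebesgue_null (F @` [set p | forall k, `|p k| <= B]).
Proof.
move=> B0 L0 lipF; have I_gt0 : (0 < #|I|)%N by apply: leq_ltn_trans card_lt.
apply: (lebesgue_null_countable_cover I_gt0) => eps eps0.
pose C := (4 * L * B) ^+ #|I|; pose M := Num.Def.trunc (C / eps).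
pose h := 2 * B / M.+1%:R; have h0 : 0 < h by rewrite divr_gt0 ?mulr_gt0.
pose q (s : {ffun K -> 'I_M.+1}) k := grid_pt B M (s k).
exists {ffun K -> 'I_M.+1}, (fun s i => F (q s) i - L * h), (fun s i => F (q s) i + L * h).
have Lh0 : 0 <= L * h := mulr_ge0 L0 (ltW h0).
have LB0 : 0 <= 4 * L * B by rewrite mulr_ge0 ?mulr_ge0 // ltW.
split.
- by move=> s i; rewrite lerD2l; lra.
- move=> _ [p Bp <-].
  have /fin_all_exists [s near_p] := fun k => grid_cell M B0 (Bp k).
  exists [ffun k => s k] => // i.
  have q_near k : `|p k - q [ffun k => s k] k| <= h /\ `|q [ffun k => s k] k| <= B.
    by rewrite /q ffunE; exact: near_p.
  have := lipF p _ h i Bp (fun k => (q_near k).2) (ltW h0) (fun k => (q_near k).1).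
  by rewrite ler_norml => /andP[? ?]; apply/andP; split; lra.
move=> ss uss.
have vol s : box_vol (fun i => F (q s) i - L * h) (fun i => F (q s) i + L * h) =
             (4 * L * B / M.+1%:R) ^+ #|I|.
  rewrite /box_vol (eq_bigr (fun=> 4 * L * B / M.+1%:R)) ?prodr_const ?cardT -?cardE //.
  by move=> i _; rewrite /h; ring.
have vol_ge0 s : 0 <= box_vol (fun i => F (q s) i - L * h) (fun i => F (q s) i + L * h).
  by rewrite vol exprn_ge0 // divr_ge0.
apply: le_trans (ler_sum_uniq_subset uss (enum_uniq _) (fun s _ => mem_enum _ s) vol_ge0) _.
rewrite (eq_bigr _ (fun s _ => vol s)) big_const_seq count_predT -cardT iter_addr_0.
rewrite card_ffun !card_ord -[leLHS]mulr_natr natrX mulrC.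
apply: le_trans (grid_volume_le _ LB0 card_lt) _; first by rewrite ler1n.
rewrite ler_pdivrMr ?ltr0Sn // -ler_pdivrMl //.
by rewrite mulrC; exact: ltW (truncnS_gt (C / eps)).
Qed.

Lemma lebesgue_null_range (F : (K -> R) -> I -> R) :
  (forall i, locally_lipschitz (fun p => F p i)) -> lebesgue_null (range F).
Proof.
move=> lipF; have I_gt0 : (0 < #|I|)%N by apply: leq_ltn_trans card_lt.
apply: (@lebesgue_null_sub _ _ _ (\bigcup_(B : nat) F @` [set p | forall k, `|p k| <= B.+1%:R])).
  move=> _ [p _ <-]; exists (Num.Def.trunc (\sum_k `|p k|)) => //; exists p => // k.
  apply: ltW; apply: le_lt_trans (truncnS_gt _).
  by rewrite (bigD1 k) //= lerDl sumr_ge0.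
apply: (lebesgue_null_bigcup I_gt0) => B.
have /fin_all_exists2 [L L0 lipL] := fun i => lipF i B.+1%:R (ler0n _ _).
apply: (@lebesgue_null_image_box _ _ (\sum_i L i)) => //; first exact: sumr_ge0.
move=> p q e i Bp Bq e0 pq; apply: le_trans (lipL i p q e Bp Bq e0 pq) _.
by rewrite ler_wpM2r // (bigD1 i) //= lerDl sumr_ge0.
Qed.

End LipschitzImage.

(** * Non-generic scenario data *)

Section AffineScenarios.
Context {R : realType} {n m : nat}.

Lemma aff_eq_cbar (c c' : scen_data n m) j (x : 'I_n -> R) :
  cbar c j = cbar c' j -> aff c j x = aff c' j x + (ctil c j - ctil c' j).
Proof. by rewrite /aff => ->; ring. Qed.

Lemma aff_lipschitz (K : finType) (C : (K -> R) -> scen_data n m)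
    (X : (K -> R) -> 'I_n -> R) j :
  (forall ij, locally_lipschitz (fun p => C p ij)) ->
  (forall l, locally_lipschitz (fun p => X p l)) ->
  locally_lipschitz (fun p => aff (C p) j (X p)).
Proof.
move=> lipC lipX; rewrite /aff /dotp /cbar /ctil.
apply: locally_lipschitzD => //.
by apply: locally_lipschitz_sum => l; exact: locally_lipschitzM.
Qed.

Definition cube := {ffun 'I_n -> bool}.
Definition cube_pt (b : cube) : 'I_n -> R := fun l => (b l)%:R.
Definition hull_pt (T : {set cube}) (w : cube -> R) : 'I_n -> R :=
  fun l => \sum_(b in T) w b * cube_pt b l.

Definition agree_on_hull (c : scen_data n m) (T : {set cube}) (J : {set 'I_m}) :=
  exists2 w : cube -> R, \sum_(b in T) w b = 1 &
    exists z, forall j, j \in J -> aff c j (hull_pt T w) = z.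

Definition generic (c : scen_data n m) :=
  forall (T : {set cube}) (J : {set 'I_m}), (#|T| < #|J|)%N -> ~ agree_on_hull c T J.

End AffineScenarios.

Section DegenerateParametrization.
Context {R : realType} {n m : nat}.
Variable c : scen_data (R := R) n m.
Context {T : {set @cube n}} {J : {set 'I_m}} {j0 : 'I_m} {b0 : @cube n}.
Hypotheses (j0J : j0 \in J) (b0T : b0 \in T).
Local Notation I := ('I_m * 'I_n.+1)%type.

Let dep : {set I} := [set (j, ord0) | j in J :\ j0].

Lemma lift_notin_dep j l : (j, lift ord0 l) \notin dep.
Proof. by apply/imsetP => -[j' _ [_]]; rewrite /bump leq0n. Qed.

Lemma j0_notin_dep : (j0, ord0) \notin dep.
Proof. by apply/imsetP => -[j' + [e]]; rewrite !inE -e eqxx. Qed.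

(* All perturbation entries but the constant terms of the pieces in [J :\ j0],
   which [param_map] solves for, and all weights but that of [b0], fixed by the
   weights summing to one. *)
Definition param := ({ij : I | ij \notin dep} + {b : cube | b \in T :\ b0})%type.

Definition free_part (p : param -> R) : scen_data n m :=
  fun ij => if insub ij is Some k then p (inl k) else 0.

Definition free_weight (p : param -> R) (b : cube) : R :=
  if insub b is Some k then p (inr k) else 0.

Definition weights (p : param -> R) (b : cube) : R :=
  if b == b0 then 1 - \sum_(b' in T :\ b0) free_weight p b' else free_weight p b.

Definition param_map (p : param -> R) : scen_data n m :=
  let c' := fun ij => c ij + free_part p ij in
  let x := hull_pt T (weights p) in
  fun ij => if ij \in dep then aff c' j0 x - aff c' ij.1 x else free_part p ij.

Lemma card_param_lt : (#|T| < #|J|)%N -> (#|{: param}| < #|{: I}|)%N.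
Proof.
move=> TJ; rewrite card_sum !card_sig.
have -> : #|[pred x | x \notin dep]| = #|~: dep| by apply: eq_card => ij; rewrite !inE.
have -> : #|[pred x in T :\ b0]| = #|T :\ b0| by apply: eq_card => b; rewrite !inE.
have dep_card : #|dep| = #|J :\ j0| by rewrite card_imset // => j j' [].
rewrite -(cardsC dep) addnC ltn_add2r dep_card.
by move: TJ; rewrite (cardsD1 j0 J) (cardsD1 b0 T) j0J b0T !add1n ltnS.
Qed.

Lemma param_map_lipschitz ij : locally_lipschitz (fun p => param_map p ij).
Proof.
have lip_free ij' : locally_lipschitz (fun p => free_part p ij').
  rewrite /free_part; case: insub => [k|]; last exact: locally_lipschitz_cst.
  exact: locally_lipschitz_coord.
have lip_fw b : locally_lipschitz (fun p => free_weight p b).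
  rewrite /free_weight; case: insub => [k|]; last exact: locally_lipschitz_cst.
  exact: locally_lipschitz_coord.
have lip_w b : locally_lipschitz (fun p => weights p b).
  rewrite /weights; case: (b == b0) => //.
  by apply: locally_lipschitzB; [exact: locally_lipschitz_cst|exact: locally_lipschitz_sum].
have lip_x l : locally_lipschitz (fun p => hull_pt T (weights p) l).
  apply: locally_lipschitz_sum => b; apply: locally_lipschitzM => //.
  exact: locally_lipschitz_cst.
have lip_c ij' : locally_lipschitz (fun p => c ij' + free_part p ij').
  by apply: locally_lipschitzD => //; exact: locally_lipschitz_cst.
rewrite /param_map; case: (ij \in dep) => //.
by apply: locally_lipschitzB; exact: aff_lipschitz.
Qed.

Lemma agree_on_hull_sub_range :
  [set y | agree_on_hull (fun ij => c ij + y ij) T J] `<=` range param_map.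
Proof.
move=> y [w w1 [z agree]].
pose p (k : param) := match k with inl ij => y (val ij) | inr b => w (val b) end.
have free_out ij : ij \notin dep -> free_part p ij = y ij.
  by move=> ij_out; rewrite /free_part insubT.
have free_in ij : ij \in dep -> free_part p ij = 0.
  by move=> ij_in; rewrite /free_part insubF ?ij_in.
have weightsE : hull_pt T (weights p) = hull_pt T w.
  apply/funext => l; apply: eq_bigr => b bT; congr (_ * _).
  have fwE b' : b' \in T :\ b0 -> free_weight p b' = w b'.
    by move=> ?; rewrite /free_weight insubT.
  rewrite /weights; case: eqP => [->|/eqP bb0]; last by rewrite fwE // !inE bb0.
  have sumD : \sum_(b' in T :\ b0) w b' = \sum_(b' in T | b' != b0) w b'.
    by apply: eq_bigl => b'; rewrite !inE andbC.
  by rewrite (eq_bigr _ fwE) sumD -w1 (bigD1 b0) //= addrK.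
have affE j : aff (fun ij => c ij + y ij) j (hull_pt T w) =
              aff (fun ij => c ij + free_part p ij) j (hull_pt T (weights p)) +
              (y (j, ord0) - free_part p (j, ord0)).
  rewrite weightsE (aff_eq_cbar _ (fun ij => c ij + free_part p ij)) /ctil.
    by congr (_ + _); ring.
  by apply/funext => l; rewrite /cbar free_out ?lift_notin_dep.
exists p => //; apply/funext => ij; rewrite /param_map.
case: ifP => [ij_in|/negbT ij_out]; last by rewrite free_out.
case/imsetP: ij_in => j jJ0 ->; have j_in : (j, ord0) \in dep by apply/imsetP; exists j.
move: jJ0; rewrite !inE => /andP[_ jJ].
have := affE j0; have := affE j; rewrite !agree // (free_out _ j0_notin_dep) (free_in _ j_in).
lra.
Qed.

End DegenerateParametrization.

Lemma lebesgue_null_agree_on_hull {R : realType} {n m : nat} (c : scen_data n m)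
    (T : {set @cube n}) (J : {set 'I_m}) :
  (#|T| < #|J|)%N ->
  lebesgue_null [set y : scen_data (R := R) n m | agree_on_hull (fun ij => c ij + y ij) T J].
Proof.
move=> TJ; have [j0 j0J] : exists j0, j0 \in J by apply/card_gt0P; apply: leq_ltn_trans TJ.
have I_gt0 : (0 < #|{: 'I_m * 'I_n.+1}|)%N.
  by rewrite card_prod !card_ord muln_gt0 andbT; apply: leq_ltn_trans (ltn_ord j0).
have [T0|[b0 b0T]] := set_0Vmem T.
  apply: lebesgue_null_sub (lebesgue_null_set0 I_gt0) => y [w].
  by rewrite T0 big_set0 => /esym/eqP; rewrite oner_eq0.
apply: lebesgue_null_sub (agree_on_hull_sub_range c j0J b0T) _.
apply: (lebesgue_null_range (card_param_lt j0J b0T TJ)).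
exact: param_map_lipschitz.
Qed.

Lemma lebesgue_null_not_generic {R : realType} {n m : nat} (hm : (0 < m)%N)
    (c : scen_data (R := R) n m) :
  lebesgue_null [set y : scen_data n m | ~ generic (fun ij => c ij + y ij)].
Proof.
have I_gt0 : (0 < #|{: 'I_m * 'I_n.+1}|)%N by rewrite card_prod !card_ord muln_gt0 hm.
pose pairs := {TJ : {set @cube n} * {set 'I_m} | (#|TJ.1| < #|TJ.2|)%N}.
apply: lebesgue_null_sub (lebesgue_null_bigcup I_gt0 _
  (fun TJ : pairs => [set y | agree_on_hull (fun ij => c ij + y ij) (val TJ).1 (val TJ).2]) _).
  move=> y not_gen; apply: contrapT => not_bad; apply: not_gen => T J TJ agree.
  by apply: not_bad; exists (exist _ (T, J) TJ).
by move=> [[T J] TJ]; exact: lebesgue_null_agree_on_hull.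
Qed.

(** * [SDset] at a basic optimal solution *)

Section BorderedMatrix.
Context {F : fieldType} {p q : nat}.
Variable A : 'M[F]_(p, q).
Hypothesis bordered_inj : forall (u : 'rV_p) (d : F),
  (forall k, (u *m A) 0 k = d) -> \sum_r u 0 r = 0 -> u = 0 /\ d = 0.
Hypothesis q_le_p : (q <= p)%N.

Let bordered : 'M[F]_(p + 1, q + 1) := block_mx A (const_mx 1) (- const_mx 1) 0.

Let mul_row_bordered (u : 'rV[F]_p) (d : 'M[F]_1) :
  row_mx u d *m bordered = row_mx (u *m A - const_mx (d 0 0)) (\sum_r u 0 r)%:M.
Proof.
rewrite mul_row_block mulmx0 addr0 mulmxN; congr (row_mx (_ - _) _).
  by apply/matrixP => i k; rewrite !mxE big_ord1 !ord1 mxE mulr1.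
apply/matrixP => i j; rewrite !ord1 !mxE eqxx mulr1n.
by apply: eq_bigr => r _; rewrite mxE mulr1.
Qed.

Let entry_subconst (u : 'rV[F]_p) (d : F) k :
  (u *m A - const_mx d) 0 k = (u *m A) 0 k - d.
Proof. by rewrite [X in X = _]mxE [X in _ + X = _]mxE [X in _ - X = _]mxE. Qed.

Let row_free_bordered : row_free bordered.
Proof.
apply: inj_row_free => v; rewrite -(hsubmxK v) mul_row_bordered -row_mx0.
case/eq_row_mx => /eqP; rewrite subr_eq0 => /eqP uA /matrixP su.
have [-> d0] : lsubmx v = 0 /\ rsubmx v 0 0 = 0.
  apply: bordered_inj => [k|]; first by rewrite uA mxE.
  by have := su 0 0; rewrite !mxE eqxx mulr1n.
have -> : rsubmx v = 0 by apply/matrixP => i j; rewrite !ord1 d0 mxE.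
by rewrite row_mx0.
Qed.

Let row_full_bordered : row_full bordered.
Proof. by rewrite /row_full eqn_leq rank_leq_col (eqP row_free_bordered) !addn1 ltnS. Qed.

Lemma bordered_surj (t : 'rV_q) (t0 : F) :
  exists (u : 'rV_p) (d : F), (forall k, (u *m A) 0 k - d = t 0 k) /\ \sum_r u 0 r = t0.
Proof.
have /row_fullP [B B_inv] := row_full_bordered.
pose w := row_mx t (t0%:M); pose v := w *m B.
have := congr1 (mulmx w) B_inv; rewrite mulmxA -/v mulmx1 -(hsubmxK v) mul_row_bordered.
case/eq_row_mx => uA su; exists (lsubmx v), (rsubmx v 0 0); split => [k|].
  by rewrite -entry_subconst uA.
by move/matrixP: su => /(_ 0 0); rewrite !mxE eqxx !mulr1n.
Qed.

Lemma bordered_const_weights :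
  exists2 lam : 'cV_q, \sum_k lam k 0 = 1 & exists g, forall r, (A *m lam) r 0 = g.
Proof.
have /row_freeP [B B_inv] := row_free_bordered.
pose l := B *m col_mx (0 : 'cV_p) (-1)%:M.
have := congr1 (mulmx^~ (col_mx (0 : 'cV_p) (-1)%:M)) B_inv.
rewrite /= -mulmxA mul1mx -/l -(vsubmxK l) mul_block_col mul0mx addr0.
case/eq_col_mx => /matrixP Alu /matrixP sl.
exists (usubmx l).
  have := sl 0 0; rewrite mulNmx [X in X = _ -> _]mxE [X in - X = _ -> _]mxE.
  rewrite [X in _ = X -> _]mxE eqxx mulr1n => /oppr_inj <-.
  by apply: eq_bigr => k _; rewrite [const_mx 1 0 k]mxE mul1r mxE.
exists (- dsubmx l 0 0) => r; have := Alu r 0.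
rewrite [X in X = _ -> _]mxE [X in _ + X = _ -> _]mxE big_ord1 [const_mx 1 r ord0]mxE mul1r.
by rewrite [X in _ = X -> _]mxE => /eqP; rewrite addr_eq0 => /eqP.
Qed.


End BorderedMatrix.

Lemma sum_delta {R : pzSemiRingType} {T : finType} (k : T) (F : T -> R) :
  \sum_i (i == k)%:R * F i = F k.
Proof. by rewrite (bigD1 k) //= eqxx mul1r big1 ?addr0 // => i /negbTE ->; rewrite mul0r. Qed.

Lemma sum_delta1 {R : pzSemiRingType} {T : finType} (k : T) :
  \sum_i ((i == k)%:R : R) = 1.
Proof. by rewrite -[RHS](sum_delta k (fun=> 1)); apply: eq_bigr => i _; rewrite mulr1. Qed.

Section Dotp.
Context {R : realType} {n : nat}.
Implicit Types u v w : 'I_n -> R.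

Lemma dotpC u v : dotp u v = dotp v u.
Proof. by apply: eq_bigr => i _; rewrite mulrC. Qed.

Lemma dotpDr u v w : dotp u (fun l => v l + w l) = dotp u v + dotp u w.
Proof. by rewrite /dotp -big_split; apply: eq_bigr => i _; rewrite mulrDr. Qed.

Lemma dotpZr u v (k : R) : dotp u (fun l => k * v l) = k * dotp u v.
Proof. by rewrite /dotp mulr_sumr; apply: eq_bigr => i _; rewrite mulrCA. Qed.

Lemma dotpNr u v : dotp u (fun l => - v l) = - dotp u v.
Proof. by rewrite /dotp -sumrN; apply: eq_bigr => i _; rewrite mulrN. Qed.

Lemma dotpBr u v w : dotp u (vsub v w) = dotp u v - dotp u w.
Proof. by rewrite /vsub dotpDr dotpNr. Qed.

Lemma dotp_voppl u v : dotp (vopp u) v = - dotp u v.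
Proof. by rewrite dotpC /vopp dotpNr dotpC. Qed.

Lemma dotp_delta u l : dotp u (fun l' => (l' == l)%:R) = u l.
Proof. by rewrite /dotp -[RHS](sum_delta l); apply: eq_bigr => i _; rewrite mulrC. Qed.

Lemma dotp_sumr (I : Type) (r : seq I) (P : pred I) u (F : I -> 'I_n -> R) :
  dotp u (fun l => \sum_(i <- r | P i) F i l) = \sum_(i <- r | P i) dotp u (F i).
Proof. by rewrite /dotp; under eq_bigr do rewrite mulr_sumr; rewrite exchange_big. Qed.

Lemma dotp_suml (I : Type) (r : seq I) (P : pred I) u (F : I -> 'I_n -> R) :
  dotp (fun l => \sum_(i <- r | P i) F i l) u = \sum_(i <- r | P i) dotp (F i) u.
Proof. by rewrite dotpC dotp_sumr; apply: eq_bigr => i _; rewrite dotpC. Qed.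

Lemma dotp_comb (V : seq ('I_n -> R)) (b : 'I_(size V) -> R) u :
  dotp u (comb V b) = \sum_i b i * dotp u (vnth V i).
Proof. by rewrite /comb dotp_sumr; apply: eq_bigr => i _; rewrite dotpZr. Qed.

End Dotp.

Lemma small_step_nonneg {R : realFieldType} {K : finType} {al be : K -> R} :
  (forall k, 0 < al k \/ (al k = 0 /\ 0 <= be k)) ->
  exists2 t0, 0 < t0 & forall t, 0 <= t <= t0 -> forall k, 0 <= al k + t * be k.
Proof.
move=> alP; pose s k := if 0 < al k then al k / (1 + `|be k|) else 1.
exists (\big[Num.min/1]_k s k) => [|t /andP[t0 ts] k].
  by apply: lt_bigmin => // k _; rewrite /s; case: ifP => // al0; rewrite divr_gt0 ?ltr_pwDl.
have := bigmin_le 1 k s; rewrite /s; case: (alP k) => [al0|[-> be0]]; last first.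
  by rewrite add0r mulr_ge0.
rewrite al0 => /(le_trans ts); rewrite ler_pdivlMr ?ltr_pwDl // => tbe.
have : - (t * `|be k|) <= t * be k by rewrite -mulrN ler_wpM2l // lerNl -normrN ler_norm.
nra.
Qed.

Section MaxAffine.
Context {R : realType} {n m : nat} {hm : (0 < m)%N} {c : scen_data (R := R) n m}.
Local Notation f := (fobj hm c).

Lemma aff_le_fobj j y : aff c j y <= f y.
Proof. exact: le_bigmax. Qed.

Lemma fobj_le y z : (forall j, aff c j y <= z) -> f y <= z.
Proof. by move=> le_z; apply: bigmax_le. Qed.

Lemma affB j y x : aff c j y - aff c j x = dotp (cbar c j) (vsub y x).
Proof. by rewrite /aff dotpBr; ring. Qed.

Lemma aff_step j x dx t :
  aff c j (fun l => x l + t * dx l) = aff c j x + t * dotp (cbar c j) dx.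
Proof. by rewrite /aff dotpDr dotpZr; ring. Qed.

(* Inactive pieces keep a positive gap for small steps. *)
Lemma fobj_step {x dx : 'I_n -> R} {d : R} :
  (forall j, aff c j x = f x -> dotp (cbar c j) dx <= d) ->
  exists2 t0, 0 < t0 & forall t, 0 <= t <= t0 ->
    f (fun l => x l + t * dx l) <= f x + t * d.
Proof.
move=> active_le.
have gapP j : 0 < f x - aff c j x \/
    (f x - aff c j x = 0 /\ 0 <= d - dotp (cbar c j) dx).
  have := aff_le_fobj j x; rewrite le_eqVlt => /orP[/eqP e|lt]; last by left; rewrite subr_gt0.
  by right; rewrite e subrr subr_ge0 active_le.
have [t0 t0_gt0 gap_ge0] := small_step_nonneg gapP.
exists t0 => // t t_le; apply: fobj_le => j.
by have := gap_ge0 t t_le j; rewrite aff_step; nra.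
Qed.

Lemma subdiff_dotp_active {h x dx : 'I_n -> R} {d : R} : subdiff f x h ->
  (forall j, aff c j x = f x -> dotp (cbar c j) dx = d) -> dotp h dx = d.
Proof.
move=> sub_h active_eq.
suff le_d dx' d' : (forall j, aff c j x = f x -> dotp (cbar c j) dx' = d') -> dotp h dx' <= d'.
  apply/eqP; rewrite eq_le le_d //= -lerN2 -dotpNr.
  by apply: le_d => j /active_eq; rewrite dotpNr => ->.
move=> active_eq'; have [|t0 t0_gt0 step] := @fobj_step x dx' d'.
  by move=> j /active_eq' ->.
have t0_in : 0 <= t0 <= t0 by rewrite lexx andbT ltW.
have := step t0 t0_in; have := sub_h (fun l => x l + t0 * dx' l).
rewrite dotpBr dotpDr dotpZr addrAC subrr add0r => ? ?.
by rewrite -(ler_pM2l t0_gt0); lra.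
Qed.

End MaxAffine.

Section ConvexHull.
Context {R : realType} {n : nat} {V : seq ('I_n -> R)}.

Lemma comb_delta (i : 'I_(size V)) : comb V (fun i' => (i' == i)%:R) = vnth V i.
Proof. by apply/funext => l; rewrite /comb sum_delta. Qed.

Lemma convhull_vnth (i : 'I_(size V)) : convhull V (vnth V i).
Proof.
exists (fun i' => (i' == i)%:R); split => [i'|]; first exact: ler0n.
by rewrite sum_delta1 comb_delta.
Qed.

Lemma normal_cone_supp {a : 'I_(size V) -> R} {x h : 'I_n -> R} :
  (forall i, 0 <= a i) -> \sum_i a i = 1 -> x = comb V a ->
  normal_cone (convhull V) x (vopp h) ->
  forall i, a i != 0 -> dotp h (vnth V i) = dotp h x.
Proof.
move=> a_ge0 a_sum1 xE nc i ai0.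
have ge_x (i' : 'I_(size V)) : 0 <= dotp h (vnth V i') - dotp h x.
  by have := nc _ (convhull_vnth i'); rewrite dotp_voppl dotpBr; lra.
have sum0 : \sum_i a i * (dotp h (vnth V i) - dotp h x) = 0.
  under eq_bigr do rewrite mulrBr.
  by rewrite sumrB -dotp_comb -xE -mulr_suml a_sum1 mul1r subrr.
have /eqP := psumr_eq0P (fun i _ => mulr_ge0 (a_ge0 i) (ge_x i)) sum0 (i := i) isT.
by rewrite mulf_eq0 (negbTE ai0) subr_eq0 => /eqP.
Qed.

End ConvexHull.

Section ActiveSet.
Context {R : realType} {n m : nat} {hm : (0 < m)%N} {c : scen_data (R := R) n m}.
Context {V : seq ('I_n -> R)} {x : 'I_n -> R} {a : 'I_(size V) -> R}.
Hypothesis opt : lp_basic_optimal c V x a (fobj hm c x).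
Local Notation f := (fobj hm c).

Let xE : x = comb V a. Proof. by case: opt => [[[_ []]]]. Qed.
Let a_ge0 i : 0 <= a i. Proof. by case: opt => [[[_ [_ []]]]]. Qed.
Let a_sum1 : \sum_i a i = 1. Proof. by case: opt => [[[_ [_ []]]]]. Qed.

Definition supp_set : {set 'I_(size V)} := [set i | a i != 0].
Definition active_set : {set 'I_m} := [set j | aff c j x == f x].

Lemma enum_active (k : 'I_#|active_set|) : aff c (enum_val k) x = f x.
Proof. by have := enum_valP k; rewrite inE => /eqP. Qed.

Lemma active_enumP j : aff c j x = f x -> exists k : 'I_#|active_set|, j = enum_val k.
Proof.
move=> /eqP j_act; have j_in : j \in active_set by rewrite inE.
by exists (enum_rank_in j_in j); rewrite enum_rankK_in.
Qed.

Definition active_mx : 'M[R]_(#|supp_set|, #|active_set|) :=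
  \matrix_(r, k) dotp (cbar c (enum_val k)) (vnth V (enum_val r : 'I_(size V))).

Definition supp_ext (u : 'rV[R]_#|supp_set|) (i : 'I_(size V)) : R :=
  \sum_r u 0 r * (i == enum_val r)%:R.

Lemma supp_ext_out u i : a i = 0 -> supp_ext u i = 0.
Proof.
move=> ai0; apply: big1 => r _; case: eqP => [iE|]; last by rewrite mulr0.
by have := enum_valP r; rewrite -iE inE ai0 eqxx.
Qed.

Lemma supp_ext_enum u r : supp_ext u (enum_val r) = u 0 r.
Proof.
rewrite /supp_ext (bigD1 r) //= eqxx mulr1 big1 ?addr0 // => r' r'r.
by rewrite (inj_eq enum_val_inj) eq_sym (negbTE r'r) mulr0.
Qed.

Lemma sum_supp_ext u : \sum_i supp_ext u i = \sum_r u 0 r.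
Proof.
rewrite exchange_big; apply: eq_bigr => r _.
by rewrite -mulr_sumr (eq_bigr _ (fun i _ => esym (mulr1 _))) sum_delta mulr1.
Qed.

Lemma dotp_comb_supp_ext u w :
  dotp w (comb V (supp_ext u)) =
  \sum_r u 0 r * dotp w (vnth V (enum_val r : 'I_(size V))).
Proof.
rewrite dotp_comb; under eq_bigr do rewrite mulr_suml.
rewrite exchange_big; apply: eq_bigr => r _.
by under eq_bigr do rewrite mulrAC mulrC; rewrite sum_delta.
Qed.

Lemma mul_active_mx u k :
  (u *m active_mx) 0 k = dotp (cbar c (enum_val k)) (comb V (supp_ext u)).
Proof. by rewrite dotp_comb_supp_ext mxE; apply: eq_bigr => r _; rewrite mxE. Qed.

Lemma active_mx_inj (u : 'rV_#|supp_set|) (d : R) :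
  (forall k, (u *m active_mx) 0 k = d) -> \sum_r u 0 r = 0 -> u = 0 /\ d = 0.
Proof.
move=> uA su; have [_ basic] := opt.
have active_eq j : aff c j x = f x -> dotp (cbar c j) (comb V (supp_ext u)) = d.
  by move=> /active_enumP [k ->]; rewrite -mul_active_mx.
have [_ ext0 ->] := basic _ _ _ active_eq erefl (supp_ext_out u) (etrans (sum_supp_ext u) su).
by split => //; apply/matrixP => i r; rewrite ord1 mxE -supp_ext_enum ext0.
Qed.

Lemma no_descent (da : 'I_(size V) -> R) (s : R) :
  (forall i, a i = 0 -> 0 <= da i) -> \sum_i da i = 0 ->
  (forall j, aff c j x = f x -> dotp (cbar c j) (comb V da) <= s) -> 0 <= s.
Proof.
move=> da_ge0 da_sum0 active_le; rewrite leNgt; apply/negP => s_lt0.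
have [[_ lp_min] _] := opt.
have aP i : 0 < a i \/ (a i = 0 /\ 0 <= da i).
  by have := a_ge0 i; rewrite le_eqVlt => /orP[/eqP/esym ai0|]; [right; rewrite da_ge0|left].
have [t1 t1_gt0 a_step] := small_step_nonneg aP.
have [t2 t2_gt0 f_step] := fobj_step active_le.
pose t := Num.min t1 t2; have t_gt0 : 0 < t by rewrite lt_min t1_gt0.
have t1_in : 0 <= t <= t1 by rewrite ltW //= ge_min lexx.
have t2_in : 0 <= t <= t2 by rewrite ltW //= ge_min lexx orbT.
pose a' i := a i + t * da i; pose x' := comb V a'.
have x'E : x' = (fun l => x l + t * comb V da l).
  apply/funext => l; rewrite /x' /comb xE /comb mulr_sumr -big_split /=.
  by apply: eq_bigr => i _; rewrite /a'; ring.
have /lp_min : lp_feasible c V x' a' (f x').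
  do !split => //; first by move=> j; exact: aff_le_fobj.
    by move=> i; exact: a_step.
  by rewrite /a' big_split /= -mulr_sumr da_sum0 mulr0 addr0.
have := f_step t t2_in; rewrite -x'E; have : t * s < 0 by rewrite pmulr_rlt0.
lra.
Qed.

Lemma card_active_le_supp :
  (forall (i : 'I_(size V)) l, vnth V i l = 0 \/ vnth V i l = 1) -> generic c ->
  (#|active_set| <= #|supp_set|)%N.
Proof.
move=> V01 gen; pose code (v : 'I_n -> R) : cube := [ffun l => v l == 1].
have code_pt (i : 'I_(size V)) : cube_pt (code (vnth V i)) = vnth V i.
  apply/funext => l; rewrite /cube_pt ffunE.
  by case: (V01 i l) => ->; rewrite ?eqxx // eq_sym oner_eq0.
pose T := [set code (vnth V i) | i : 'I_(size V) in supp_set]%SET.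
pose w (b : cube) := \sum_(i in supp_set | code (vnth V i) == b) a i.
have sum_supp (F : 'I_(size V) -> R) : \sum_(i in supp_set) a i * F i = \sum_i a i * F i.
  rewrite [RHS](bigID (mem supp_set)) /= [X in _ = _ + X]big1 ?addr0 // => i.
  by rewrite inE negbK => /eqP ->; rewrite mul0r.
have hull_x : hull_pt T w = x.
  apply/funext => l; rewrite xE /hull_pt /comb -sum_supp.
  rewrite (partition_big_imset (fun i : 'I_(size V) => code (vnth V i))) /=.
  apply: eq_bigr => b _; rewrite /w mulr_suml.
  by apply: eq_bigr => i /andP[_ /eqP <-]; rewrite code_pt.
have w_sum : \sum_(b in T) w b = 1.
  rewrite -a_sum1 -(eq_bigr _ (fun i _ => mulr1 (a i))) -sum_supp.
  rewrite (partition_big_imset (fun i : 'I_(size V) => code (vnth V i))) /=.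
  by apply: eq_bigr => b _; apply: eq_bigr => i _; rewrite mulr1.
have : ~~ (#|T| < #|active_set|)%N.
  apply/negP => lt; apply: (gen T active_set lt); exists w => //.
  by exists (f x) => j; rewrite inE hull_x => /eqP.
by rewrite -leqNgt => /leq_trans; apply; exact: leq_imset_card.
Qed.

Hypothesis card_active_le : (#|active_set| <= #|supp_set|)%N.

Let active_surj := bordered_surj active_mx active_mx_inj card_active_le.

(* [h l = dotp h dx] for a direction [dx] spanned by the support along which
   every active piece grows at the same rate [d], and [d] depends only on the
   data. *)
Lemma SDset_uniq h h' : SDset f V x h -> SDset f V x h' -> h = h'.
Proof.
suff coord l : exists d, forall h1, SDset f V x h1 -> h1 l = d.
  move=> SDh SDh'; apply/funext => l; have [d hd] := coord l.
  by rewrite (hd h) ?(hd h').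
have [u [d [uA su]]] := active_surj (\row_k - cbar c (enum_val k) l) 0.
exists d => h1 [sub_h1 nc_h1].
pose dx l' := (l' == l)%:R + comb V (supp_ext u) l'.
have active_eq j : aff c j x = f x -> dotp (cbar c j) dx = d.
  move=> /active_enumP [k ->]; rewrite dotpDr dotp_delta -mul_active_mx.
  by have := uA k; rewrite [X in _ = X -> _]mxE; lra.
have := subdiff_dotp_active sub_h1 active_eq; rewrite dotpDr dotp_delta.
rewrite dotp_comb_supp_ext (eq_bigr (fun r => u 0 r * dotp h1 x)) => [|r _].
  by rewrite -mulr_suml su mul0r addr0.
have := enum_valP r; rewrite inE => ar0.
by rewrite (normal_cone_supp a_ge0 a_sum1 xE nc_h1).
Qed.

Variables (lam : 'cV[R]_#|active_set|) (gam : R).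
Hypotheses (lam_sum1 : \sum_k lam k 0 = 1)
           (lam_eq : forall r, (active_mx *m lam) r 0 = gam).

Definition subgrad : 'I_n -> R := fun l => \sum_k lam k 0 * cbar c (enum_val k) l.

Lemma dotp_subgrad w : dotp subgrad w = \sum_k lam k 0 * dotp (cbar c (enum_val k)) w.
Proof.
by rewrite dotp_suml; apply: eq_bigr => k _; rewrite dotpC dotpZr dotpC.
Qed.

Lemma lam_active_mx (u : 'rV_#|supp_set|) :
  \sum_k (u *m active_mx) 0 k * lam k 0 = gam * \sum_r u 0 r.
Proof.
have -> : \sum_k (u *m active_mx) 0 k * lam k 0 = (u *m active_mx *m lam) 0 0.
  by rewrite [RHS]mxE.
by rewrite -mulmxA mxE mulr_sumr; apply: eq_bigr => r _; rewrite lam_eq mulrC.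
Qed.

Lemma subgrad_supp i : a i != 0 -> dotp subgrad (vnth V i) = gam.
Proof.
move=> ai0; have i_in : i \in supp_set by rewrite inE.
rewrite -(enum_rankK_in i_in i_in) -(lam_eq (enum_rank_in i_in i)) mxE dotp_subgrad.
by apply: eq_bigr => k _; rewrite mxE mulrC.
Qed.

Lemma subgrad_x : dotp subgrad x = gam.
Proof.
rewrite xE dotp_comb (eq_bigr (fun i => a i * gam)) => [|i _].
  by rewrite -mulr_suml a_sum1 mul1r.
by case: (eqVneq (a i) 0) => [->|/subgrad_supp ->]; rewrite ?mul0r.
Qed.

(* A violated inequality would give, through [active_surj], a feasible descent
   direction of the LP. *)
Lemma dual_feasible (rho : 'I_#|active_set| -> R) (da0 : 'I_(size V) -> R) :
  (forall k, 0 <= rho k) -> (forall i, a i = 0 -> 0 <= da0 i) ->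
  gam * \sum_i da0 i <= \sum_k lam k 0 * rho k + dotp subgrad (comb V da0).
Proof.
move=> rho_ge0 da0_ge0.
pose t := \row_k (- dotp (cbar c (enum_val k)) (comb V da0) - rho k).
have [u [d [uA su]]] := active_surj t (- \sum_i da0 i).
have uAk k : (u *m active_mx) 0 k = d - dotp (cbar c (enum_val k)) (comb V da0) - rho k.
  by have := uA k; rewrite [X in _ = X -> _]mxE; lra.
have d_ge0 : 0 <= d.
  apply: (@no_descent (fun i => supp_ext u i + da0 i)).
  - by move=> i ai0; rewrite supp_ext_out // add0r da0_ge0.
  - by rewrite big_split /= sum_supp_ext su addNr.
  move=> j /active_enumP [k ->].
  rewrite dotp_comb (eq_bigr _ (fun i _ => mulrDl _ _ _)) big_split /= -!dotp_comb.
  by rewrite -mul_active_mx uAk; have := rho_ge0 k; lra.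
have := lam_active_mx u; rewrite su (eq_bigr (fun k => d * lam k 0 -
  lam k 0 * dotp (cbar c (enum_val k)) (comb V da0) - lam k 0 * rho k)) => [|k _].
  by rewrite !sumrB -mulr_sumr lam_sum1 mulr1 -dotp_subgrad; lra.
by rewrite uAk; ring.
Qed.

Lemma lam_ge0 k : 0 <= lam k 0.
Proof.
have := @dual_feasible (fun k' => (k' == k)%:R) (fun=> 0) (fun _ => ler0n _ _) (fun _ _ => lexx 0).
have -> : dotp subgrad (comb V (fun=> 0)) = 0.
  by rewrite dotp_comb big1 // => i _; rewrite mul0r.
by rewrite big1 // mulr0 addr0; under eq_bigr do rewrite mulrC; rewrite sum_delta.
Qed.

Lemma subgrad_vertex_ge (i : 'I_(size V)) : gam <= dotp subgrad (vnth V i).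
Proof.
have := @dual_feasible (fun=> 0) (fun i' => (i' == i)%:R) (fun _ => lexx 0) (fun _ _ => ler0n _ _).
by rewrite sum_delta1 mulr1 big1 ?add0r ?comb_delta // => k _; rewrite mulr0.
Qed.

Lemma subgrad_SD : SDset f V x subgrad.
Proof.
split=> [y|_ [b [b_ge0 [b_sum1 ->]]]].
  have -> : f x + dotp subgrad (vsub y x) = \sum_k lam k 0 * aff c (enum_val k) y.
    rewrite dotp_subgrad -[f x]mul1r -lam_sum1 mulr_suml -big_split /=.
    by apply: eq_bigr => k _; rewrite -affB enum_active; ring.
  apply: le_trans (_ : \sum_k lam k 0 * f y <= _); last by rewrite -mulr_suml lam_sum1 mul1r.
  by apply: ler_sum => k _; rewrite ler_wpM2l ?lam_ge0 ?aff_le_fobj.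
rewrite dotp_voppl dotpBr subgrad_x dotp_comb oppr_le0 subr_ge0 -[gam]mul1r -b_sum1 mulr_suml.
by apply: ler_sum => i _; rewrite ler_wpM2l ?subgrad_vertex_ge.
Qed.

Lemma SDset_subgrad : SDset f V x = [set subgrad].
Proof.
apply/seteqP; split => h; last by move=> ->; exact: subgrad_SD.
by move=> SDh; exact: SDset_uniq SDh subgrad_SD.
Qed.

End ActiveSet.

Lemma SDset_singleton {R : realType} {n m : nat} (hm : (0 < m)%N)
    (c : scen_data (R := R) n m) (V : seq ('I_n -> R)) x (a : 'I_(size V) -> R) :
  generic c -> (forall (i : 'I_(size V)) l, vnth V i l = 0 \/ vnth V i l = 1) ->
  lp_basic_optimal c V x a (fobj hm c x) -> exists g, SDset (fobj hm c) V x = [set g].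
Proof.
move=> gen V01 opt; have card_le := card_active_le_supp opt V01 gen.
have [lam lam_sum1 [gam lam_eq]] := bordered_const_weights _ (active_mx_inj opt).
by exists (subgrad lam); exact: (SDset_subgrad opt card_le _ _ lam_sum1 lam_eq).
Qed.

Lemma SD_reach_vertices {R : realType} {n m : nat} {hm : (0 < m)%N}
    {X : set ('I_n -> R)} {c : scen_data n m} {V} :
  SD_reach hm X c V -> forall i : 'I_(size V), X (vnth V i).
Proof.
elim=> [x0 Xx0 [[|//] ?] //|V' x a g xh _ IH _ _ Xxh _ _ [i /=]].
rewrite size_rcons ltnS /vnth nth_rcons => i_le.
case: ltnP => [iV'|V'i]; first exact: (IH (Ordinal iV')).
have -> : i = size V' by apply/eqP; rewrite eqn_leq i_le V'i.
by rewrite eqxx.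
Qed.

Theorem theorem2 (R : realType) (n m : nat) (hm : (0 < m)%N)
  (X : set ('I_n -> R)) (hX0 : X !=set0)
  (hX01 : forall x, X x -> forall i, x i = 0 \/ x i = 1)
  (c : scen_data n m)
  (d : measure_display) (Omega : measurableType d) (P : probability Omega R)
  (xi : Omega -> scen_data n m)
  (hcont : cont_distributed P xi) (hsupp : full_dim_support P xi) :
  {ae P, forall w, SD_singleton_property hm X (fun ij => c ij + xi w ij)}.
Proof.
have [N [mN PN0 bad_N]] := hcont _ (lebesgue_null_not_generic hm c).
exists N; split => // w /= not_singleton; apply: bad_N => /= gen.
apply: not_singleton => V reach_V x a opt; apply: SDset_singleton gen _ opt => i l.
exact: hX01 (SD_reach_vertices reach_V i) l.
Qed.
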